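(* Let $m,n\ge 1$ and let $F\subseteq\{1,\dots,m\}\times\{1,\dots,n\}$ be a binary image with row sums $\mathcal R=(r_1,\dots,r_m)$ and column sums $\mathcal C=(c_1,\dots,c_n)$, where $r_1=n$ and $r_m=0$. Let $L_h$ be the length of the horizontal boundary of $F$. Define $b_i=\#\{j: c_j\ge i\}$ and $d_i=b_i-r_i$ for $i=1,\dots,m$. Then for every integer $t\ge 0$ and every choice of indices $1\le i_1<i_2<\dots<i_{2t+1}\le m$, \[ L_h\ \ge\ 2n+d_{i_1}-d_{i_2}+d_{i_3}-\cdots-d_{i_{2t}}+2d_{i_{2t+1}}, \] \[ L_h\ \ge\ 2n-d_{i_{2t+1}}+d_{i_{2t}}-d_{i_{2t-1}}+\cdots+d_{i_2}-2d_{i_1}. \]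
   Context: A binary image is a finite set $F\subseteq\mathbb Z^2$; point $(i,j)$ lies in row $i$ and column $j$ (row indices increase downwards, column indices to the right). The row sum $r_i$ is the number of points of $F$ in row $i$, and the column sum $c_j$ is the number of points of $F$ in column $j$. The horizontal boundary of $F$ is the set of ordered pairs of points $((i,j),(i',j))$ of $\mathbb Z^2$ with $|i-i'|=1$, $(i,j)\in F$ and $(i',j)\notin F$ (so pieces above the top cell or below the bottom cell of a column also count); its length is the number of such pairs. *)

From HB Require Import structures.
From mathcomp Require Import all_boot all_order all_algebra.
Set Implicit Arguments. Unset Strict Implicit. Unset Printing Implicit Defensive.
Import Order.TTheory GRing.Theory Num.Theory.

(* A binary image inside the m x n grid: rows 'I_m, columns 'I_n
   (0-based: row k here is row k+1 of the paper). *)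

Definition rowsum m n (F : {set 'I_m * 'I_n}) (i : 'I_m) : nat :=
  #|[set j : 'I_n | (i, j) \in F]|.

Definition colsum m n (F : {set 'I_m * 'I_n}) (j : 'I_n) : nat :=
  #|[set i : 'I_m | (i, j) \in F]|.

Definition inZ2 m n (F : {set 'I_m * 'I_n}) (i j : int) : bool :=
  [exists p in F, ((Posz (nat_of_ord p.1)) == i) && ((Posz (nat_of_ord p.2)) == j)].

Definition hboundary m n (F : {set 'I_m * 'I_n}) : nat :=
  \sum_(p in F)
     ((~~ inZ2 F ((Posz (nat_of_ord p.1)) - 1)%R (Posz (nat_of_ord p.2)) : nat)
      + (~~ inZ2 F ((Posz (nat_of_ord p.1)) + 1)%R (Posz (nat_of_ord p.2)) : nat)).

(* b_{k+1} = #{ j : c_j >= k+1 } for 0-based row index k *)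
Definition bseq m n (F : {set 'I_m * 'I_n}) (k : 'I_m) : nat :=
  #|[set j : 'I_n | k < colsum F j]|.

Definition dseq m n (F : {set 'I_m * 'I_n}) (k : 'I_m) : int :=
  ((Posz (bseq F k)) - (Posz (rowsum F k)))%R.

From Pilot Require Import Defs.
From mathcomp Require Import all_boot all_order all_algebra zify.
Set Implicit Arguments. Unset Strict Implicit. Unset Printing Implicit Defensive.
Import Order.TTheory GRing.Theory Num.Theory.
Local Open Scope ring_scope.

(* Both sides of the inequalities split as sums over columns.  Fix a column,
   let g i say whether row i lies in F, and let D be the number of descents
   (rows i in F with i+1 not in F).  Since row 0 is full, the column meets
   L_h in 2D pieces, and its share of d_i is x_i = [i < c_j] - g i.  Both x_i
   and -x_i are bounded by the number of descents above row i and by the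
   number below it, and x_b - x_a by the number between a < b; chaining these
   bounds along i_1 < ... < i_{2t+1} over disjoint row intervals bounds each
   alternating sum by D.  If D = 1 the column is a top-aligned segment and
   all x_i vanish; otherwise 2 + D <= 2D. *)

Lemma alt_sum_shift (R : pzRingType) (a : nat -> R) (n : nat) :
  \sum_(k < n) (-1) ^+ k * a k.+1 =
  a 0%N - (-1) ^+ n * a n - \sum_(k < n) (-1) ^+ k * a k.
Proof.
have -> : \sum_(k < n) (-1) ^+ k * a k.+1 = a 0%N - \sum_(k < n.+1) (-1) ^+ k * a k.
  rewrite big_ord_recl expr0 mul1r opprD addrA subrr add0r -sumrN.
  by apply: eq_bigr => k _; rewrite exprS mulN1r mulNr opprK.
by rewrite big_ord_recr /= opprD addrA addrAC.
Qed.

Section AlternatingSums.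
Variables (w : nat -> nat) (f : nat -> int).
Local Notation W a b := (Posz (\sum_(a <= k < b) w k)%N).
Hypothesis f_step : forall a b, (a <= b)%N -> f b - f a <= W a b.

Lemma Posz_sum_cat a b c : (a <= b <= c)%N -> W a c = W a b + W b c.
Proof. by case/andP=> ab bc; rewrite -PoszD -big_cat_nat. Qed.

Lemma alt_sum_le t (s : nat -> nat) :
  (forall i j, (i <= j <= 2 * t)%N -> (s i <= s j)%N) ->
  - \sum_(k < 2 * t) (-1) ^+ k * f (s k) <= W (s 0%N) (s (2 * t)%N).
Proof.
elim: t => [|t IH] s_mono; first by rewrite big_ord0 oppr0.
have le_s i j : (i <= j <= (2 * t).+2)%N -> (s i <= s j)%N.
  by move=> ij; apply: s_mono; rewrite mulnS.
have {}IH : - \sum_(k < 2 * t) (-1) ^+ k * f (s k) <= W (s 0%N) (s (2 * t)%N).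
  by apply: IH => i j ij; apply: le_s; lia.
have step : f (s (2 * t).+1) - f (s (2 * t)%N) <= W (s (2 * t)%N) (s (2 * t).+1).
  by apply/f_step/le_s; rewrite !leqnSn.
have -> : (2 * t.+1 = (2 * t).+2)%N by rewrite mulnS.
rewrite !big_ord_recr /= exprS -signr_odd oddM /= expr0 mulN1r.
rewrite (@Posz_sum_cat _ (s (2 * t)%N)) ?le_s; try lia.
rewrite (@Posz_sum_cat (s (2 * t)%N) (s (2 * t).+1)) ?le_s; try lia.
move: IH; set S := \sum_(k < _) _; lia.
Qed.

Lemma alt_sum_shift_le t (s : nat -> nat) :
  (forall i j, (i <= j <= 2 * t)%N -> (s i <= s j)%N) ->
  - \sum_(k < 2 * t) (-1) ^+ k * f (s k.+1) <= W (s 0%N) (s (2 * t)%N).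
Proof.
(* [u] is [s] shifted by one and frozen at [s (2 * t)], hence monotone on [0, 2t]. *)
move=> s_mono; pose u k := s (minn k.+1 (2 * t)).
have u_mono i j : (i <= j <= 2 * t)%N -> (u i <= u j)%N.
  by move=> ij; apply: s_mono; lia.
have := alt_sum_le u_mono.
have -> : \sum_(k < 2 * t) (-1) ^+ k * f (u k) = \sum_(k < 2 * t) (-1) ^+ k * f (s k.+1).
  by apply: eq_bigr => k _; rewrite /u (minn_idPl (ltn_ord k)).
rewrite /u (minn_idPr (leqnSn _)) (@Posz_sum_cat (s 0%N) (s (minn 1 (2 * t)))) ?s_mono;
  lia.
Qed.

End AlternatingSums.

Section Column.
Variables (m : nat) (g : nat -> bool).

Definition descent k := g k && ~~ g k.+1.
Definition ascent k := ~~ g k && g k.+1.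
Definition descents a b := (\sum_(a <= k < b) descent k)%N.
Definition ascents a b := (\sum_(a <= k < b) ascent k)%N.

Lemma descents_cat a b c :
  (a <= b <= c)%N -> descents a c = (descents a b + descents b c)%N.
Proof. by case/andP=> ab bc; rewrite /descents -big_cat_nat. Qed.

Lemma descentsB a b : (a <= b)%N ->
  Posz (descents a b) - Posz (ascents a b) = Posz (g a) - Posz (g b).
Proof.
move=> ab; rewrite -!natz !natr_sum -sumrB -opprB.
rewrite -(telescope_sumr (fun k => (g k)%:R)) // -sumrN.
by apply: eq_bigr => k _; rewrite /descent /ascent; case: (g k) (g k.+1) => [] [].
Qed.

Lemma sub_le_descents a b : (a <= b)%N -> Posz (g a) - Posz (g b) <= Posz (descents a b).
Proof. by move/descentsB <-; rewrite lerBlDr lerDl. Qed.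

Definition height := (\sum_(0 <= i < m) g i)%N.

Definition defect i : int := Posz (i < height) - Posz (g i).

Lemma defect_step a b : (a <= b)%N -> defect b - defect a <= Posz (descents a b).
Proof.
move=> ab; rewrite /defect; have := sub_le_descents ab.
case: (ltnP b height) => [bh|_]; first by rewrite (leq_ltn_trans ab bh); lia.
case: (a < height)%N; lia.
Qed.

Hypothesis g0 : g 0.
Hypothesis g_out : forall i, (m <= i)%N -> g i = false.

Lemma height_le i : (forall j, (i <= j)%N -> g j = false) -> (height <= i)%N.
Proof.
move=> gi; have sum_le a b : (\sum_(a <= k < b) g k <= b - a)%N.
  by rewrite -[leqRHS]muln1 -sum_nat_const_nat; apply: leq_sum => k _; apply: leq_b1.
rewrite /height; case: (leqP m i) => [mi|im].
  by apply: leq_trans (sum_le _ _) _; rewrite subn0.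
rewrite (big_cat_nat (leq0n i) (ltnW im)) /=.
have -> : (\sum_(i <= k < m) g k = 0)%N.
  by rewrite big_nat_cond big1 // => k /andP[/andP[ik _] _]; rewrite gi.
by rewrite addn0; apply: leq_trans (sum_le _ _) _; rewrite subn0.
Qed.

Lemma height_gt i : (forall j, (j <= i)%N -> g j) -> (i < height)%N.
Proof.
move=> gi; have im : (i < m)%N by rewrite ltnNge; apply/negP => /g_out; rewrite gi.
rewrite /height (big_cat_nat (leq0n i.+1) im) /=; apply: leq_trans (leq_addr _ _).
rewrite (eq_big_nat _ _ (F2 := fun => 1%N)) ?sum_nat_const_nat ?subn0 ?muln1 //.
by move=> k /andP[_ ki]; rewrite gi.
Qed.

Lemma descents_gt0 : (0 < descents 0 m)%N.
Proof. by have := sub_le_descents (leq0n m); rewrite g0 g_out. Qed.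

Lemma descents_tail_gt0 s : (s < height)%N -> (0 < descents s m)%N.
Proof.
apply: contraTT; rewrite -!leqNgt leqn0 => /eqP D0.
apply: height_le => j sj; case: (leqP m j) => [/g_out //|jm].
have Dj : descents j m = 0%N.
  by move: D0; rewrite (@descents_cat s j m) ?sj ?(ltnW jm) //; lia.
by have := sub_le_descents (ltnW jm); rewrite (g_out (leqnn m)) Dj; case: (g j).
Qed.

Lemma descents_head_gt0 s : (height <= s)%N -> (0 < descents 0 s)%N.
Proof.
apply: contraTT; rewrite -leqNgt leqn0 -ltnNge => /eqP D0.
apply: height_gt => j js.
have Dj : descents 0 j = 0%N.
  by move: D0; rewrite (@descents_cat 0 j s) ?js //; lia.
by have := sub_le_descents (leq0n j); rewrite g0 Dj; case: (g j).
Qed.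

Lemma defect_le_head s : defect s <= Posz (descents 0 s).
Proof. by have := sub_le_descents (leq0n s); rewrite /defect g0; lia. Qed.

Lemma defect_le_tail s : defect s <= Posz (descents s m).
Proof. by rewrite /defect; case: ltnP => [/descents_tail_gt0|_]; lia. Qed.

Lemma oppr_defect_le_head s : - defect s <= Posz (descents 0 s).
Proof. by rewrite /defect; case: ltnP => [_|/descents_head_gt0]; lia. Qed.

Lemma oppr_defect_le_tail s : (s <= m)%N -> - defect s <= Posz (descents s m).
Proof. by move/sub_le_descents; rewrite /defect (g_out (leqnn m)); lia. Qed.

Lemma defect_eq0 s : (s <= m)%N -> (descents 0 m <= 1)%N -> defect s = 0.
Proof.
move=> sm; rewrite (@descents_cat 0 s m) ?sm //.
have := defect_le_head s; have := defect_le_tail s.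
have := oppr_defect_le_head s; have := oppr_defect_le_tail sm; lia.
Qed.

Definition column_boundary :=
  (\sum_(0 <= i < m) ((g i && ~~ ((0 < i) && g i.-1)) + descent i))%N.

Lemma column_boundaryE : column_boundary = (2 * descents 0 m)%N.
Proof.
have m_gt0 : (0 < m)%N by rewrite lt0n; apply: contraTneq g0 => m0; rewrite g_out ?m0.
have tops : (\sum_(0 <= i < m) (g i && ~~ ((0 < i) && g i.-1)) = 1 + ascents 0 m)%N.
  have gm : g m.-1.+1 = false by rewrite prednK // g_out.
  rewrite /ascents -(prednK m_gt0) big_nat_recl // big_nat_recr //= g0.
  rewrite /ascent gm andbF addn0; congr (_ + _)%N.
  by apply: eq_bigr => i _; rewrite andbC.
have := descentsB (leq0n m); rewrite g0 (g_out (leqnn m)).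
rewrite /column_boundary big_split /= tops -/(descents 0 m); lia.
Qed.

Lemma two_add_le_column_boundary (e : int) :
  e <= Posz (descents 0 m) -> ((descents 0 m <= 1)%N -> e = 0) ->
  2 + e <= Posz column_boundary.
Proof. by rewrite column_boundaryE; have := descents_gt0; lia. Qed.

Variables (t : nat) (s : nat -> nat).
Hypothesis s_mono : forall i j, (i <= j <= 2 * t)%N -> (s i <= s j)%N.
Hypothesis s_le : forall k, (s k <= m)%N.

Lemma descents_split :
  descents 0 m = (descents 0 (s 0) + descents (s 0) (s (2 * t)) + descents (s (2 * t)) m)%N.
Proof. by rewrite -!descents_cat ?s_le ?s_mono ?leq0n //= s_mono. Qed.

Lemma alt_defect_le_column_boundary :
  2 + \sum_(k < 2 * t) (-1) ^+ k * defect (s k) + 2 * defect (s (2 * t))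
    <= Posz column_boundary.
Proof.
rewrite -addrA; apply: two_add_le_column_boundary => [|D1].
  have := alt_sum_shift_le defect_step s_mono.
  rewrite (alt_sum_shift (fun k => defect (s k))) -signr_odd oddM /= expr0 mul1r.
  rewrite -/(descents _ _) descents_split.
  have := defect_le_head (s 0); have := defect_le_tail (s (2 * t)).
  set S := \sum_(k < _) _; lia.
rewrite (defect_eq0 (s_le _) D1) mulr0 addr0.
by apply: big1 => k _; rewrite defect_eq0 ?mulr0.
Qed.

Lemma alt_defect_shift_le_column_boundary :
  2 - 2 * defect (s 0) + \sum_(k < 2 * t) (-1) ^+ k * defect (s k.+1)
    <= Posz column_boundary.
Proof.
rewrite -addrA; apply: two_add_le_column_boundary => [|D1].
  have := alt_sum_le defect_step s_mono.
  rewrite (alt_sum_shift (fun k => defect (s k))) -signr_odd oddM /= expr0 mul1r.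
  rewrite -/(descents _ _) descents_split.
  have := oppr_defect_le_head (s 0); have := oppr_defect_le_tail (s_le (2 * t)).
  set S := \sum_(k < _) _; lia.
rewrite (defect_eq0 (s_le _) D1) mulr0 oppr0 add0r.
by apply: big1 => k _; rewrite defect_eq0 ?mulr0.
Qed.

End Column.

Lemma card_set_sum (T : finType) (P : pred T) : #|[set x | P x]| = (\sum_(x : T) P x)%N.
Proof.
by rewrite -sum1_card big_mkcond /=; apply: eq_bigr => x _; rewrite inE; case: (P x).
Qed.

Section BinaryImage.
Variables (m n : nat) (F : {set 'I_m * 'I_n}).

Definition column (j : 'I_n) (i : nat) : bool := inZ2 F (Posz i) (Posz j).

Lemma inZ2_ord (i : 'I_m) (j : 'I_n) : inZ2 F (Posz i) (Posz j) = ((i, j) \in F).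
Proof.
apply/existsP/idP => [[[a b] /andP[abF /andP[/eqP[ai] /eqP[bj]]]]|ijF].
  by have -> : (i, j) = (a, b) by congr pair; apply: val_inj.
by exists (i, j); rewrite ijF !eqxx.
Qed.

Lemma inZ2_N1 (j : int) : inZ2 F (-1) j = false.
Proof. by apply/existsP => [[[a b] /andP[_ /andP[/eqP ai _]]]]. Qed.

Lemma column_out j i : (m <= i)%N -> column j i = false.
Proof.
move=> mi; apply/existsP => [[[a b] /andP[_ /andP[/eqP[ai] _]]]].
by move: (ltn_ord a); rewrite ai ltnNge mi.
Qed.

Lemma full_row_mem (i : 'I_m) (j : 'I_n) : rowsum F i = n -> (i, j) \in F.
Proof.
move=> ri; have : [set j | (i, j) \in F] = setT.
  by apply/eqP; rewrite eqEcard subsetT cardsT card_ord; exact: eq_leq (esym ri).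
by move/setP/(_ j); rewrite !inE => ->.
Qed.

Lemma colsumE j : colsum F j = height m (column j).
Proof.
rewrite /colsum card_set_sum /height big_mkord.
by apply: eq_bigr => i _; rewrite /column inZ2_ord.
Qed.

Lemma dseqE k : dseq F k = \sum_j defect m (column j) k.
Proof.
rewrite /dseq /Defs.bseq /rowsum !card_set_sum -!natz !natr_sum -sumrB.
by apply: eq_bigr => j _; rewrite /defect -colsumE /column inZ2_ord !natz.
Qed.

Lemma hboundaryE : hboundary F = (\sum_j column_boundary m (column j))%N.
Proof.
rewrite /column_boundary; under eq_bigr do rewrite big_mkord.
rewrite exchange_big pair_big /hboundary big_mkcond /=.
apply: eq_bigr => [[i j]] _ /=; rewrite /descent /column inZ2_ord.
case: ((i, j) \in F) => //=; congr (_ + _)%N.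
  by case: (nat_of_ord i) => [|i'] /=; rewrite ?inZ2_N1 // -addn1 PoszD addrK.
by rewrite -addn1 PoszD.
Qed.

Lemma sum_mul_dseq (N : nat) (a : 'I_N -> int) (p : 'I_N -> 'I_m) :
  \sum_(k < N) a k * dseq F (p k) = \sum_j \sum_(k < N) a k * defect m (column j) (p k).
Proof. by rewrite exchange_big; apply: eq_bigr => k _; rewrite dseqE mulr_sumr. Qed.

End BinaryImage.

Theorem theorem3p1 (m n : nat) (F : {set 'I_m * 'I_n})
  (Hm : (1 <= m)%N) (Hn : (1 <= n)%N)
  (Hr1 : forall i : 'I_m, nat_of_ord i = 0%N -> rowsum F i = n)
  (Hrm : forall i : 'I_m, nat_of_ord i = m.-1 -> rowsum F i = 0%N)
  (t : nat) (s : 'I_(2 * t).+1 -> 'I_m)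
  (Hs : forall a b : 'I_(2 * t).+1, (a < b)%N -> (s a < s b)%N) :
  ((Posz (2 * n)) + (\sum_(k < 2 * t) (-1) ^+ k * dseq F (s (widen_ord (leqnSn _) k)))
     + 2 * dseq F (s ord_max) <= (Posz (hboundary F)))%R
  /\
  ((Posz (2 * n)) - 2 * dseq F (s ord0)
     + (\sum_(k < 2 * t) (-1) ^+ k * dseq F (s (lift ord0 k))) <= (Posz (hboundary F)))%R.
Proof.
pose u k := nat_of_ord (s (inord k)).
have u_mono i j : (i <= j <= 2 * t)%N -> (u i <= u j)%N.
  case/andP; rewrite leq_eqVlt => /orP[/eqP -> // | ij jt].
  by apply/ltnW/Hs; rewrite !inordK //; lia.
have u_le k : (u k <= m)%N := ltnW (ltn_ord _).
have col0 j : column F j 0.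
  by have := inZ2_ord F (Ordinal Hm) j; rewrite /column /= => ->; apply/full_row_mem/Hr1.
have col_out j := column_out F j.
have two_n : Posz (2 * n) = \sum_(j : 'I_n) 2.
  by rewrite sumr_const card_ord -mulr_natr natz; lia.
have bd_sum : Posz (hboundary F) = \sum_j Posz (column_boundary m (column F j)).
  by rewrite hboundaryE -natz natr_sum; apply: eq_bigr => j _; rewrite natz.
have s_inord (k : 'I_(2 * t).+1) : s k = s (inord k) by rewrite inord_val.
rewrite bd_sum two_n; split.
  rewrite sum_mul_dseq (s_inord ord_max) dseqE mulr_sumr -!big_split /=.
  apply: ler_sum => j _.
  under eq_bigr => k _ do rewrite s_inord /=.
  exact: (alt_defect_le_column_boundary (col0 j) (col_out j) u_mono u_le).
rewrite sum_mul_dseq (s_inord ord0) dseqE mulr_sumr -sumrN -!big_split /=.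
apply: ler_sum => j _.
under eq_bigr => k _ do rewrite s_inord /=.
exact: (alt_defect_shift_le_column_boundary (col0 j) (col_out j) u_mono u_le).
Qed.
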